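(* Let $0<q<1/2$, $p=1-q$, $\lambda=q/p$. For each integer $z\ge2$ let $\kappa(z)$ be the unique $\kappa\in(0,+\infty)$ satisfying $$\sum_{j=1}^{z-1}\left(\prod_{i=1}^{j}\left(1-\frac iz\right)\right)\frac{1}{\kappa^j}=\frac{\lambda}{1-\lambda}.$$ Then $$\lim_{z\to+\infty}\kappa(z)=\lambda^{-1}=\frac pq.$$
   Context: The left-hand side is strictly decreasing in $\kappa$ from $+\infty$ to $0$, so $\kappa(z)$ is well defined. $\kappa(z)$ is the unique point where the second derivative in $\kappa$ of the conditional double-spend success probability $P(z,\kappa)=1-Q(z,\kappa zq/p)+(q/p)^ze^{\kappa z(p-q)/p}Q(z,\kappa z)$ changes sign ($Q$ the regularized upper incomplete gamma function). *)

From HB Require Import structures.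
From mathcomp Require Import all_boot all_order all_algebra.
From mathcomp Require Import all_classical all_reals all_analysis.
Set Implicit Arguments. Unset Strict Implicit. Unset Printing Implicit Defensive.
Import Order.TTheory GRing.Theory Num.Theory.
Local Open Scope ring_scope.

Definition kappaLHS {R : realType} (z : nat) (k : R) : R :=
  \sum_(1 <= j < z) (\prod_(1 <= i < j.+1) (1 - i%:R / z%:R)) / k ^+ j.

From HB Require Import structures.
From mathcomp Require Import all_boot all_order all_algebra.
From mathcomp Require Import all_classical all_reals all_analysis.
From mathcomp Require Import lra zify.
Import Order.TTheory GRing.Theory Num.Theory.
Import numFieldNormedType.Exports.
Local Open Scope classical_set_scope.
Local Open Scope ring_scope.

(* Write odds t = t / (1 - t) and lambda = odds q = q / p; the right-hand side of the defining
   equation of kappa(z) is then odds lambda.  F_z := kappaLHS z is a geometric series in 1/k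
   with weights w_z(j) = prod_(i <= j) (1 - i/z) in [0, 1], so F_z(k) <= odds (1/k) for k > 1;
   as odds is increasing, this forces kappa(z) <= 1/lambda.  Conversely, the Weierstrass product
   inequality gives w_z(j) >= 1 - j^2/z, so any fixed partial sum of the geometric series is
   eventually almost attained: for 1 < k < 1/lambda, F_z(k) > odds lambda for all large z, and
   since F_z is nonincreasing, kappa(z) > k. *)

Definition odds {R : fieldType} (t : R) : R := t / (1 - t).

Lemma ltr_odds (R : realFieldType) (s t : R) : s < t -> t < 1 -> odds s < odds t.
Proof.
move=> st t1; have s1 : 0 < 1 - s by lra.
rewrite /odds ltr_pdivrMr // mulrAC ltr_pdivlMr ?subr_gt0 //; nra.
Qed.

Lemma prodr_1B_ge {R : realDomainType} {I : eqType} (r : seq I) (a : I -> R) :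
  {in r, forall i, 0 <= a i <= 1} ->
  1 - \sum_(i <- r) a i <= \prod_(i <- r) (1 - a i).
Proof.
elim: r => [|x r IH] a01; first by rewrite !big_nil subr0.
rewrite !big_cons.
have /andP[ax0 ax1] := a01 x (mem_head x r).
have a01r : {in r, forall i, 0 <= a i <= 1}.
  by move=> i ri; apply: a01; rewrite inE ri orbT.
have IHr := IH a01r.
have S0 : 0 <= \sum_(i <- r) a i by rewrite big_seq sumr_ge0 // => i /a01r /andP[].
have : (1 - a x) * (1 - \sum_(i <- r) a i) <= (1 - a x) * \prod_(i <- r) (1 - a i).
  by rewrite ler_wpM2l ?subr_ge0.
nra.
Qed.

Lemma ler_natr_div1 {R : numFieldType} (i z : nat) : (i <= z)%N -> i%:R / z%:R <= 1 :> R.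
Proof.
case: z => [|z] iz; first by rewrite invr0 mulr0 ler01.
by rewrite ler_pdivrMr ?ltr0Sn // mul1r ler_nat.
Qed.

Section kappaLHS.
Variable R : realType.

Definition kappa_weight (z j : nat) : R := \prod_(1 <= i < j.+1) (1 - i%:R / z%:R).

Lemma kappaLHSE z (k : R) : kappaLHS z k = \sum_(1 <= j < z) kappa_weight z j / k ^+ j.
Proof. by []. Qed.

Lemma kappa_weight_itv {z j : nat} : (j <= z)%N -> 0 <= kappa_weight z j <= 1.
Proof.
move=> jz; rewrite /kappa_weight big_seq_cond.
have factor_itv i : (i \in index_iota 1 j.+1) && true -> 0 <= 1 - (i%:R / z%:R : R) <= 1.
  rewrite mem_index_iota andbT => /andP[_ ij].
  by rewrite subr_ge0 ler_natr_div1 ?gerBl ?divr_ge0 //; lia.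
by rewrite prodr_ge0 ?prodr_ile1 // => i /factor_itv /andP[].
Qed.

Lemma kappa_weight_ge {z j : nat} : (j <= z)%N -> 1 - j%:R ^+ 2 / z%:R <= kappa_weight z j.
Proof.
move=> jz.
have a01 : {in index_iota 1 j.+1, forall i, 0 <= (i%:R / z%:R : R) <= 1}.
  move=> i; rewrite mem_index_iota => /andP[_ ij].
  by rewrite divr_ge0 ?ler_natr_div1 //; lia.
apply: le_trans (prodr_1B_ge _ (fun i => i%:R / z%:R) a01).
rewrite lerD2l lerN2.
apply: le_trans (ler_sum_nat (G := fun=> j%:R / z%:R) _) _ => [i /andP[_ ij]|].
  by rewrite ler_wpM2r ?invr_ge0 // ler_nat; lia.
by rewrite sumr_const_nat subSS subn0 -mulrnAl -mulr_natr expr2.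
Qed.

Lemma kappaLHS_antimono z {k k' : R} : 0 < k -> k <= k' -> kappaLHS z k' <= kappaLHS z k.
Proof.
move=> k0 kk'; have k'0 := lt_le_trans k0 kk'.
rewrite !kappaLHSE; apply: ler_sum_nat => j /andP[_ jz].
have /andP[w0 _] := kappa_weight_itv (ltnW jz).
rewrite ler_wpM2l // -!exprVn; apply: lerXn2r.
- by rewrite nnegrE invr_ge0 ltW.
- by rewrite nnegrE invr_ge0 ltW.
- by rewrite lef_pV2 ?posrE.
Qed.

Lemma sumr_geometric_series (x : R) n :
  \sum_(1 <= j < n.+1) x ^+ j = series (geometric x x) n.
Proof. by rewrite -(geometric_partial_tail n 1) add1n. Qed.

Lemma sumr_geometric_le_odds (x : R) n : 0 < x < 1 -> \sum_(1 <= j < n) x ^+ j <= odds x.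
Proof.
case: n => [|n] /andP[x0 x1]; first by rewrite big_geq // divr_ge0 ?subr_ge0 ?ltW.
by rewrite sumr_geometric_series geometric_le_lim ?ger0_norm ?ltW.
Qed.

Lemma kappaLHS_le_odds z {k : R} : 1 < k -> kappaLHS z k <= odds k^-1.
Proof.
move=> k1; have k0 : 0 < k := lt_trans ltr01 k1.
apply: le_trans (sumr_geometric_le_odds _ z _); last by rewrite invr_gt0 k0 invf_lt1.
rewrite kappaLHSE; apply: ler_sum_nat => j /andP[_ jz].
rewrite exprVn -[leRHS]mul1r ler_wpM2r ?invr_ge0 ?exprn_ge0 ?(ltW k0) //.
by have /andP[] := kappa_weight_itv (ltnW jz).
Qed.

Lemma kappaLHS_ge_partial z N (k : R) : 0 < k -> (N < z)%N ->
  (1 - N%:R ^+ 2 / z%:R) * \sum_(1 <= j < N.+1) k^-1 ^+ j <= kappaLHS z k.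
Proof.
move=> k0 Nz; rewrite kappaLHSE [leRHS](big_cat_nat _ (n := N.+1)) //=.
rewrite -[leLHS]addr0 lerD //; last first.
  rewrite big_nat_cond sumr_ge0 // => j /andP[/andP[_ jz] _].
  have /andP[w0 _] := kappa_weight_itv (ltnW jz).
  by rewrite divr_ge0 ?exprn_ge0 ?(ltW k0).
rewrite mulr_sumr; apply: ler_sum_nat => j /andP[_ jN].
rewrite exprVn ler_wpM2r ?invr_ge0 ?exprn_ge0 ?(ltW k0) //.
apply: le_trans (kappa_weight_ge _); last by lia.
by rewrite lerD2l lerN2 ler_wpM2r // lerXn2r ?nnegrE ?ler_nat //; lia.
Qed.

Lemma kappaLHS_gt_near (k c : R) : 1 < k -> c < odds k^-1 ->
  \forall z \near \oo, c < kappaLHS z k.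
Proof.
move=> k1 ck; have k0 : 0 < k := lt_trans ltr01 k1.
have x01 : `|k^-1| < 1 by rewrite gtr0_norm ?invr_gt0 // invf_lt1.
have [N cS] : exists N, c < \sum_(1 <= j < N.+1) k^-1 ^+ j.
  have [N _ SN] := cvgr_gt _ (@cvg_geometric_series _ k^-1 k^-1 x01) _ ck.
  by exists N; rewrite sumr_geometric_series; apply: SN => /=.
set S := \sum_(1 <= j < N.+1) _ in cS.
have S0 : 0 <= S by rewrite sumr_ge0 // => j _; rewrite exprn_ge0 // invr_ge0 ltW.
near=> z.
apply: lt_le_trans (kappaLHS_ge_partial z N k k0 _); last by near: z; exact: nbhs_infty_gt.
have z0 : 0 < z%:R :> R by near: z; exact: nbhs_infty_gtr.
have : N%:R ^+ 2 * S / (S - c) < z%:R by near: z; exact: nbhs_infty_gtr.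
rewrite ltr_pdivrMr ?subr_gt0 // => NSz.
have : N%:R ^+ 2 / z%:R * S < S - c by rewrite mulrAC ltr_pdivrMr // [_ * z%:R]mulrC.
by rewrite -/S mulrBl mul1r; lra.
Unshelve. all: by end_near.
Qed.

Lemma kappaLHS_root_le z (k lam : R) : 0 < lam -> lam < 1 -> 0 < k ->
  kappaLHS z k = odds lam -> k <= lam^-1.
Proof.
move=> lam0 lam1 k0 Fk; rewrite leNgt; apply/negP => lk.
have k1 : 1 < k by apply: lt_trans lk; rewrite invf_gt1.
have kl : k^-1 < lam by rewrite invf_plt ?posrE.
by have := kappaLHS_le_odds z k1; rewrite Fk leNgt ltr_odds.
Qed.

Lemma kappa_root_gt_near (kappa : nat -> R) (lam b : R) :
  0 < lam -> 1 < b -> b < lam^-1 ->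
  (\forall z \near \oo, 0 < kappa z /\ kappaLHS z (kappa z) = odds lam) ->
  \forall z \near \oo, b < kappa z.
Proof.
move=> lam0 b1 bl root; have b0 : 0 < b := lt_trans ltr01 b1.
have lb : odds lam < odds b^-1 by rewrite ltr_odds ?invf_lt1 // invf_pgt ?posrE.
near=> z.
have [k0 Fk] : 0 < kappa z /\ kappaLHS z (kappa z) = odds lam by near: z.
rewrite ltNge; apply/negP => kb.
have Fb : odds lam < kappaLHS z b by near: z; exact: kappaLHS_gt_near.
by have := kappaLHS_antimono z k0 kb; rewrite Fk leNgt Fb.
Unshelve. all: by end_near.
Qed.

End kappaLHS.

Lemma cvgr_from_below (R : realFieldType) (u : nat -> R) (a l : R) : a < l ->
  (\forall n \near \oo, u n <= l) ->
  (forall b, a < b < l -> \forall n \near \oo, b < u n) ->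
  u @ \oo --> l.
Proof.
move=> al ul bu; apply/cvgrPdist_lt => e e0.
set b := Num.max ((a + l) / 2) (l - e / 2).
have ab : a < b < l by rewrite lt_max gt_max; apply/and3P; split; lra.
have le_b : l - e / 2 <= b by rewrite le_max lexx orbT.
near=> n.
have bun : b < u n by near: n; exact: bu.
have unl : u n <= l by near: n.
by rewrite ger0_norm ?subr_ge0 //; lra.
Unshelve. all: by end_near.
Qed.

Theorem mainTheorem12 (R : realType) (q : R) (kappa : nat -> R) :
  0 < q -> q < 1 / 2 ->
  (forall z : nat, (2 <= z)%N ->
     0 < kappa z /\
     kappaLHS z (kappa z) = (q / (1 - q)) / (1 - q / (1 - q))) ->
  kappa @ \oo --> (1 - q) / q.
Proof.
move=> q0 q_half Hk.
set lam := q / (1 - q).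
have lam0 : 0 < lam by rewrite divr_gt0 //; lra.
have lam1 : lam < 1 by rewrite ltr_pdivrMr ?mul1r; lra.
have -> : (1 - q) / q = lam^-1 by rewrite invf_div.
have root : \forall z \near \oo, 0 < kappa z /\ kappaLHS z (kappa z) = odds lam.
  by exists 2%N => // z; apply: Hk.
apply: (@cvgr_from_below _ _ 1) => [|| b /andP[b1 bl]].
- by rewrite invf_gt1.
- by apply: filterS root => z [k0 Fk]; apply: kappaLHS_root_le Fk.
- exact: kappa_root_gt_near root.
Qed.
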